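(* Let $f_{\mathrm B}$ be a Bad Teacher. For any unlearnable sample $i\in\mathcal S_U$ and any value $f_{\mathbf W}\in\mathbb R$ of the student logit, the derivatives of the per-sample adversarial distillation loss and adversarial training loss with respect to the student logit satisfy $\left|\dfrac{\partial\mathcal L_{\mathrm{AD}}}{\partial f_{\mathbf W}}-\dfrac{\partial\mathcal L_{\mathrm{AT}}}{\partial f_{\mathbf W}}\right|\le e^{-Cd}$.
   Context: $\ell(z)=\log(1+e^{-z})$, $\sigma(z)=(1+e^{-z})^{-1}$. Labeled training samples $(\mathbf X_i,y_i)$, $y_i\in\{\pm1\}$, indices partitioned $[N]=\mathcal S_L\sqcup\mathcal S_U$. As functions of the student's logit $f_{\mathbf W}$ (the student output on the adversarial input of sample $i$), $\mathcal L_{\mathrm{AT}}=\ell(y_if_{\mathbf W})$ and $\mathcal L_{\mathrm{AD}}=\sigma(y_if_{\mathrm T}(\mathbf X_i))\ell(y_if_{\mathbf W})+\sigma(-y_if_{\mathrm T}(\mathbf X_i))\ell(-y_if_{\mathbf W})$ for a fixed teacher $f_{\mathrm T}$. A Bad Teacher $f_{\mathrm B}$ satisfies $y_if_{\mathrm B}(\mathbf X_i)\ge\Gamma$ for all $i\in[N]$ (both learnable and unlearnable samples). Standing assumption: $\Gamma\ge Cd$, where $d$ is the data dimension and $C>0$ is a (sufficiently large) universal constant. *)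

From Stdlib Require Import Reals.
From Coquelicot Require Import Coquelicot.
Open Scope R_scope.

Definition ell (z : R) : R := ln (1 + exp (- z)).

Definition sigma (z : R) : R := / (1 + exp (- z)).

Definition L_AT (y fW : R) : R := ell (y * fW).

(* Per-sample adversarial-distillation loss with teacher logit fT = f_T(X_i),
   as a function of the student logit fW (label y). *)
Definition L_AD (y fT fW : R) : R :=
  sigma (y * fT) * ell (y * fW) + sigma (- (y * fT)) * ell (- (y * fW)).

Definition input (d : nat) : Type := {k : nat | (k < d)%nat} -> R.

(* Since ell'(z) = - sigma (- z) and sigma z + sigma (- z) = 1, the two
   derivatives differ by exactly y * sigma (- y fT), whatever the student logit.
   For a unit label this has size sigma (- y fT) = 1 / (1 + e^(y fT)) < e^(- y fT),
   and a Bad Teacher has y fT >= Gamma >= C d. *)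

From Pilot Require Import Defs.
From Stdlib Require Import Reals Lra.
From Coquelicot Require Import Coquelicot.
(* Coquelicot also defines [sigma] (finite sums); re-importing makes [sigma] the sigmoid. *)
Import Defs.
Open Scope R_scope.

Lemma sigma_pos (z : R) : 0 < sigma z.
Proof.
  apply Rinv_0_lt_compat.
  pose proof (exp_pos (- z)); lra.
Qed.

Lemma sigma_opp (z : R) : sigma (- z) = / (1 + exp z).
Proof. unfold sigma; now rewrite Ropp_involutive. Qed.

Lemma sigma_add_opp (z : R) : sigma z + sigma (- z) = 1.
Proof.
  rewrite sigma_opp; unfold sigma; rewrite exp_Ropp.
  pose proof (exp_pos z).
  field; lra.
Qed.

Lemma sigma_opp_le_exp_opp (z : R) : sigma (- z) <= exp (- z).
Proof.
  rewrite sigma_opp, exp_Ropp.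
  pose proof (exp_pos z).
  apply Rinv_le_contravar; lra.
Qed.

Lemma is_derive_ell (z : R) : is_derive ell z (- sigma (- z)).
Proof.
  rewrite sigma_opp; unfold ell.
  pose proof (exp_pos z); pose proof (exp_pos (- z)).
  auto_derive; [lra |].
  rewrite exp_Ropp; field; lra.
Qed.

Lemma is_derive_ell_scal (c x : R) :
  is_derive (fun w => ell (c * w)) x (- c * sigma (- (c * x))).
Proof.
  replace (- c * sigma (- (c * x))) with (scal c (- sigma (- (c * x))))
    by (unfold scal; simpl; unfold mult; simpl; ring).
  apply (is_derive_comp ell (fun w => c * w)); [apply is_derive_ell |].
  auto_derive; [easy | ring].
Qed.

Lemma Derive_L_AT (y x : R) :
  Derive (fun w => L_AT y w) x = - y * sigma (- (y * x)).
Proof. apply is_derive_unique, is_derive_ell_scal. Qed.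

Lemma Derive_L_AD (y t x : R) :
  Derive (fun w => L_AD y t w) x
  = sigma (y * t) * (- y * sigma (- (y * x)))
    + sigma (- (y * t)) * (y * sigma (y * x)).
Proof.
  apply is_derive_unique; unfold L_AD.
  apply (is_derive_plus (V := R_NormedModule)
           (fun w => sigma (y * t) * ell (y * w))
           (fun w => sigma (- (y * t)) * ell (- (y * w))));
    apply is_derive_scal; [apply is_derive_ell_scal |].
  apply (is_derive_ext (fun w => ell (- y * w))); [intro; f_equal; ring |].
  replace (y * sigma (y * x)) with (- - y * sigma (- (- y * x)))
    by (f_equal; [ring | f_equal; ring]).
  apply is_derive_ell_scal.
Qed.

Lemma Derive_L_AD_sub_L_AT (y t x : R) :
  Derive (fun w => L_AD y t w) x - Derive (fun w => L_AT y w) x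
  = y * sigma (- (y * t)).
Proof.
  rewrite Derive_L_AD, Derive_L_AT.
  pose proof (sigma_add_opp (y * t)); pose proof (sigma_add_opp (y * x)).
  replace (sigma (y * t)) with (1 - sigma (- (y * t))) by lra.
  replace (sigma (y * x)) with (1 - sigma (- (y * x))) by lra.
  ring.
Qed.

Theorem lemmaH2
  (d N : nat) (C Gamma : R)
  (X : nat -> input d) (y : nat -> R)
  (S_L S_U : nat -> Prop)
  (fB : input d -> R)
  (hC : 0 < C)
  (hGamma : Gamma >= C * INR d)
  (hy : forall i, (i < N)%nat -> y i = 1 \/ y i = -1)
  (hcover : forall i, (i < N)%nat <-> (S_L i \/ S_U i))
  (hdisj : forall i, ~ (S_L i /\ S_U i))
  (hbad : forall i, (i < N)%nat -> y i * fB (X i) >= Gamma) :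
  forall i, S_U i -> forall fW : R,
    Rabs (Derive (fun w => L_AD (y i) (fB (X i)) w) fW
          - Derive (fun w => L_AT (y i) w) fW) <= exp (- (C * INR d)).
Proof.
  intros i hU fW.
  assert (hi : (i < N)%nat) by (apply hcover; now right).
  assert (hy_abs : Rabs (y i) = 1)
    by (destruct (hy i hi) as [-> | ->]; [apply Rabs_R1 | rewrite Rabs_left; lra]).
  specialize (hbad i hi).
  rewrite Derive_L_AD_sub_L_AT, Rabs_mult, hy_abs, Rmult_1_l.
  rewrite Rabs_pos_eq by (left; apply sigma_pos).
  apply Rle_trans with (exp (- (y i * fB (X i)))); [apply sigma_opp_le_exp_opp |].
  assert (ht : - (y i * fB (X i)) <= - (C * INR d)) by lra.
  destruct ht as [ht | ->]; [left; now apply exp_increasing | apply Rle_refl].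
Qed.
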